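(* Let $\vec n\in\mathbb{R}^9$ with $\sum_i n(i)=0$ and $\sum_i n(i)^2=1$, let $r\ge 0$, and let $\rho$ be the trace-one Hermitian operator $\rho=\sum_{i=1}^9\left[4p(i)-\tfrac13\right]\Pi_i$ where $p(i)=\frac19+r\,n(i)$. Then: (i) $\rho$ is a density operator if and only if $r^2\le\frac1{18}$ and $4r^3F(\vec n)-r^2+\frac1{54}\ge0$; (ii) $\rho$ is a density operator on the boundary of the state space (having a zero eigenvalue) if and only if $r^2\le\frac1{18}$ and $4r^3F(\vec n)-r^2+\frac1{54}=0$; (iii) $\rho$ is a pure state if and only if $r^2=\frac1{18}$ and $F(\vec n)=\frac1{\sqrt2}$.
   Context: Let $\omega=e^{2\pi i/3}$, standard basis $|0\rangle,|1\rangle,|2\rangle$ of $\mathbb{C}^3$, $X|j\rangle=|j+1\bmod 3\rangle$, $Z|j\rangle=\omega^j|j\rangle$, $|\psi_0\rangle=\frac1{\sqrt2}(0,1,-1)^T$; for $m,n\in\{0,1,2\}$ and $i=3m+n+1$, $\Pi_i$ is the projector onto $X^mZ^n|\psi_0\rangle$ (the canonical Hesse SIC), so $p(i)=\frac13\operatorname{Tr}(\rho\Pi_i)$. Identify index $i=3m+n+1$ with $(m,n)\in\mathbb{Z}_3^2$; the 12 affine lines are $\{1,2,3\},\{4,5,6\},\{7,8,9\},\{1,4,7\},\{2,5,8\},\{3,6,9\},\{1,5,9\},\{2,6,7\},\{3,4,8\},\{1,6,8\},\{2,4,9\},\{3,5,7\}$, and $Q$ is the set of ordered triples $(i,j,k)$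 of pairwise distinct indices with $\{i,j,k\}$ a line. For $v\in\mathbb{R}^9$ define $F(v)=\sum_i v(i)^3-\frac12\sum_{(i,j,k)\in Q}v(i)v(j)v(k)$. *)

(* the complex numbers are an arbitrary numClosedFieldType C
   (e.g. algC, or the genuine complex numbers). *)
From HB Require Import structures.
From mathcomp Require Import all_boot all_order all_algebra all_field.
Set Implicit Arguments. Unset Strict Implicit. Unset Printing Implicit Defensive.
Import Order.TTheory GRing.Theory Num.Theory.
Local Open Scope ring_scope.

Definition omega (C : numClosedFieldType) : C := (-1 + 'i * sqrtC 3) / 2.

Definition adj {C : numClosedFieldType} {m n : nat} (A : 'M[C]_(m, n)) : 'M[C]_(n, m) :=
  map_mx (fun x => x^*) A^T.

(* shift X|j> = |j+1 mod 3>, clock Z|j> = omega^j |j>  (0-based indices) *)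
Definition Xop (C : numClosedFieldType) : 'M[C]_3 :=
  \matrix_(i < 3, j < 3) (if (i : nat) == (j.+1 %% 3)%N then 1 else 0).
Definition Zop (C : numClosedFieldType) : 'M[C]_3 :=
  \matrix_(i < 3, j < 3) (if i == j then omega C ^+ i else 0).

Definition psi0 (C : numClosedFieldType) : 'cV[C]_3 :=
  (sqrtC 2)^-1 *: \col_(i < 3) (if (i : nat) == 1%N then 1 else if (i : nat) == 2%N then -1 else 0).

(* SIC vector and projector for 0-based index i = 3m+n, i : 'I_9
   (the paper's index i = 3m+n+1 corresponds to our i - 1) *)
Definition sicvec (C : numClosedFieldType) (i : 'I_9) : 'cV[C]_3 :=
  Xop C ^+ (i %/ 3) *m Zop C ^+ (i %% 3) *m psi0 C.
Definition Pi (C : numClosedFieldType) (i : 'I_9) : 'M[C]_3 := sicvec C i *m adj (sicvec C i).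

(* the 12 affine lines, 0-based (paper's indices minus 1) *)
Definition lines : seq (seq nat) :=
  [:: [:: 0; 1; 2]; [:: 3; 4; 5]; [:: 6; 7; 8];
      [:: 0; 3; 6]; [:: 1; 4; 7]; [:: 2; 5; 8];
      [:: 0; 4; 8]; [:: 1; 5; 6]; [:: 2; 3; 7];
      [:: 0; 5; 7]; [:: 1; 3; 8]; [:: 2; 4; 6]]%N.

Definition inQ (i j k : 'I_9) : bool :=
  [&& i != j, j != k, i != k &
      has (fun l => [&& (i : nat) \in l, (j : nat) \in l & (k : nat) \in l]) lines].

Definition Fcub {C : numClosedFieldType} (v : 'I_9 -> C) : C :=
  \sum_i v i ^+ 3
  - 2^-1 * \sum_i \sum_j \sum_k (if inQ i j k then v i * v j * v k else 0).

Definition prob {C : numClosedFieldType} (r : C) (n : 'I_9 -> C) (i : 'I_9) : C := 9^-1 + r * n i.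
Definition rho {C : numClosedFieldType} (r : C) (n : 'I_9 -> C) : 'M[C]_3 :=
  \sum_i (4 * prob r n i - 3^-1) *: Pi C i.

Definition psd {C : numClosedFieldType} (A : 'M[C]_3) : Prop :=
  forall v : 'cV[C]_3, 0 <= (adj v *m A *m v) 0 0.
Definition density {C : numClosedFieldType} (A : 'M[C]_3) : Prop :=
  adj A = A /\ psd A /\ \tr A = 1.
Definition pure {C : numClosedFieldType} (A : 'M[C]_3) : Prop := density A /\ A *m A = A.

From HB Require Import structures.
From mathcomp Require Import all_boot all_order all_algebra all_field.
From mathcomp Require Import ring.
Import Order.TTheory GRing.Theory Num.Theory.
Local Open Scope ring_scope.

(* A trace-one Hermitian 3x3 matrix A has real eigenvalues
   d1, d2, d3 (spectral theorem); it is positive semidefinite iff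
   e2 = d1 d2 + d2 d3 + d3 d1 = (1 - tr A^2) / 2 and e3 = det A are both
   nonnegative (an elementary fact about three reals with nonnegative sum);
   it has the eigenvalue 0 iff det A = 0; and a density operator is a
   projector iff its purity tr A^2 equals 1.  So the theorem reduces to the
   values of tr rho, tr rho^2 and det rho.

   To compute them we write the SIC vectors X^m Z^k psi0 in coordinates, which
   turns sum_i c_i Pi_i into an explicit matrix whose entries are discrete
   Fourier sums in omega.  Polynomial identities modulo
   omega^2 = - omega - 1 then give tr rho = 1, tr rho^2 = 1/3 + 12 r^2 and
   det rho = 2 (4 r^3 F(n) - r^2 + 1/54). *)

(* Keep [simpl] from unfolding omega, so that it stays an atom for ring/field. *)
Arguments omega : simpl never.

Section Omega.
Variable C : numClosedFieldType.

Lemma omega_sq : omega C ^+ 2 = - omega C - 1.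
Proof.
have h3 : sqrtC (3 : C) ^+ 2 = 3 by rewrite sqrtCK.
have hi : ('i : C) ^+ 2 = -1 by rewrite sqrCi.
by rewrite /omega; field: h3 hi.
Qed.

Lemma conj_omega : (omega C)^* = omega C ^+ 2.
Proof.
have h3 : sqrtC (3 : C) ^+ 2 = 3 by rewrite sqrtCK.
have hi : ('i : C) ^+ 2 = -1 by rewrite sqrCi.
have hs : (sqrtC (3 : C))^* = sqrtC 3.
  by apply/CrealP/ger0_real; rewrite sqrtC_ge0 ler0n.
rewrite /omega fmorph_div /= rmorphD /= rmorphN rmorph1 rmorphM /= conjCi hs conjC_nat.
by field: h3 hi.
Qed.
End Omega.

Definition o3_0 : 'I_3 := @Ordinal 3 0 isT.
Definition o3_1 : 'I_3 := @Ordinal 3 1 isT.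
Definition o3_2 : 'I_3 := @Ordinal 3 2 isT.

Definition o9_0 : 'I_9 := @Ordinal 9 0 isT.
Definition o9_1 : 'I_9 := @Ordinal 9 1 isT.
Definition o9_2 : 'I_9 := @Ordinal 9 2 isT.
Definition o9_3 : 'I_9 := @Ordinal 9 3 isT.
Definition o9_4 : 'I_9 := @Ordinal 9 4 isT.
Definition o9_5 : 'I_9 := @Ordinal 9 5 isT.
Definition o9_6 : 'I_9 := @Ordinal 9 6 isT.
Definition o9_7 : 'I_9 := @Ordinal 9 7 isT.
Definition o9_8 : 'I_9 := @Ordinal 9 8 isT.

Lemma big_ord3 (R : Type) (idx : R) (op : Monoid.law idx) (f : 'I_3 -> R) :
  \big[op/idx]_i f i = op (op (f o3_0) (f o3_1)) (f o3_2).
Proof.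
rewrite !big_ord_recr big_ord0 /= Monoid.mul1m.
by repeat congr (op _ _); congr f; apply: val_inj.
Qed.

Lemma sum_ord9 (R : nmodType) (f : 'I_9 -> R) : \sum_i f i =
  f o9_0 + f o9_1 + f o9_2 + f o9_3 + f o9_4 + f o9_5 + f o9_6 + f o9_7 + f o9_8.
Proof.
rewrite !big_ord_recr big_ord0 /= add0r.
by repeat congr (_ + _); congr f; apply: val_inj.
Qed.

(* [canon3 i] is [i] rebuilt as one of the named constants, so that indices
   computed by [lift]/[widen_ord] become syntactically recognisable. *)
Definition canon3 (i : 'I_3) : 'I_3 :=
  match val i with 0 => o3_0 | 1 => o3_1 | _ => o3_2 end.

Lemma canon3E (i : 'I_3) : canon3 i = i.
Proof. by apply: val_inj; case: i => [[|[|[|i]]] Hi]. Qed.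

Lemma det_mx3 (R : comNzRingType) (A : 'M[R]_3) : \det A =
  A o3_0 o3_0 * A o3_1 o3_1 * A o3_2 o3_2 + A o3_0 o3_1 * A o3_1 o3_2 * A o3_2 o3_0
  + A o3_0 o3_2 * A o3_1 o3_0 * A o3_2 o3_1 - A o3_0 o3_2 * A o3_1 o3_1 * A o3_2 o3_0
  - A o3_0 o3_1 * A o3_1 o3_0 * A o3_2 o3_2 - A o3_0 o3_0 * A o3_1 o3_2 * A o3_2 o3_1.
Proof.
have -> : A = \matrix_(i, j) A (canon3 i) (canon3 j).
  by apply/matrixP => i j; rewrite mxE !canon3E.
rewrite (expand_det_row _ ord0) big_ord3 /cofactor !(expand_det_row _ ord0).
rewrite !big_ord_recr !big_ord0 /= !add0r /cofactor !det_mx11 !mxE /=.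
by rewrite !expr0 !expr1 !mulN1r !mul1r; ring.
Qed.

(* Cyclic predecessor on Z_3: the shift X maps the coordinate at [a-1] to [a]. *)
Definition prev3 (a : 'I_3) : 'I_3 :=
  match val a with 0 => o3_2 | 1 => o3_0 | _ => o3_1 end.

Section SicVectors.
Variable C : numClosedFieldType.

Lemma mulmx_clock_pow k (v : 'cV[C]_3) :
  Zop C ^+ k *m v = \col_a ((omega C ^+ a) ^+ k * v a 0).
Proof.
elim: k => [|k IH].
  by apply/matrixP => a j; rewrite mul1mx mxE expr0 mul1r [j]ord1.
rewrite exprS -mulmxE -mulmxA IH; apply/matrixP => a j.
rewrite !mxE big_ord3 /= !mxE exprS.
by case: a => [[|[|[|a]]] Ha] //=; rewrite !mul0r ?add0r ?addr0 mulrA;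
   congr (_ * v _ _); apply: val_inj.
Qed.

Lemma mulmx_shift_pow m (v : 'cV[C]_3) :
  Xop C ^+ m *m v = \col_a (v (iter m prev3 a) 0).
Proof.
elim: m => [|m IH].
  by apply/matrixP => a j; rewrite mul1mx mxE [j]ord1.
rewrite exprS -mulmxE -mulmxA IH; apply/matrixP => a j.
rewrite !mxE iterSr big_ord3 /= !mxE.
by case: a => [[|[|[|a]]] Ha] //=; rewrite !mul0r ?mul1r ?add0r ?addr0.
Qed.

End SicVectors.

Section SicFrame.
Context {C : numClosedFieldType}.
Local Notation w := (omega C).

Definition fid : 'cV[C]_3 :=
  \col_(i < 3) (if (i : nat) == 1%N then 1 else if (i : nat) == 2%N then -1 else 0).

(* Quotient and remainder by 3 on 0..8, as functions that compute by [simpl]. *)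
Definition quot3 (i : nat) : nat :=
  match i with 0 | 1 | 2 => 0 | 3 | 4 | 5 => 1 | _ => 2 end.
Definition rem3 (i : nat) : nat :=
  match i with 0 | 3 | 6 => 0 | 1 | 4 | 7 => 1 | _ => 2 end.

Lemma quot3E (i : 'I_9) : (i %/ 3 = quot3 i)%N.
Proof. by case: i => [[|[|[|[|[|[|[|[|[|i]]]]]]]]] Hi]. Qed.
Lemma rem3E (i : 'I_9) : (i %% 3 = rem3 i)%N.
Proof. by case: i => [[|[|[|[|[|[|[|[|[|i]]]]]]]]] Hi]. Qed.

(* Coordinate [a] of the unnormalised vector X^m Z^k (0,1,-1), i = 3m + k. *)
Definition sic_coord (i : 'I_9) (a : 'I_3) : C :=
  let b := iter (quot3 i) prev3 a in (w ^+ b) ^+ rem3 i * fid b 0.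

Lemma sicvec_coord i : sicvec C i = (sqrtC 2)^-1 *: \col_a sic_coord i a.
Proof.
rewrite /sicvec quot3E rem3E (_ : psi0 C = (sqrtC 2)^-1 *: fid) //.
rewrite -!scalemxAr -mulmxA mulmx_clock_pow mulmx_shift_pow.
by apply/matrixP => a j; rewrite !mxE /sic_coord mxE.
Qed.

Lemma Pi_entry i a b : Pi C i a b = 2^-1 * (sic_coord i a * (sic_coord i b)^*).
Proof.
have hs : ((sqrtC (2 : C))^-1)^* = (sqrtC 2)^-1.
  by apply/CrealP/ger0_real; rewrite invr_ge0 sqrtC_ge0 ler0n.
have h2 : sqrtC (2 : C) ^+ 2 = 2 by rewrite sqrtCK.
have h2' : sqrtC (2 : C) != 0 by rewrite sqrtC_eq0 pnatr_eq0.
rewrite /Pi sicvec_coord /adj !mxE big_ord1 !mxE rmorphM /= hs.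
by field: h2.
Qed.

Definition frame (c : 'I_9 -> C) : 'M[C]_3 := \sum_i c i *: Pi C i.

(* Its entries: diagonal entries collect the six projectors supported there,
   off-diagonal ones a discrete Fourier transform of one row of coefficients. *)
Definition frame_entry (c : 'I_9 -> C) (a b : nat) : C :=
  match a, b with
  | 0, 0 => 2^-1 * (c o9_3 + c o9_4 + c o9_5 + c o9_6 + c o9_7 + c o9_8)
  | 1, 1 => 2^-1 * (c o9_0 + c o9_1 + c o9_2 + c o9_6 + c o9_7 + c o9_8)
  | 2, 2 => 2^-1 * (c o9_0 + c o9_1 + c o9_2 + c o9_3 + c o9_4 + c o9_5)
  | 1, 2 => - 2^-1 * (c o9_0 + c o9_1 * w ^+ 2 + c o9_2 * w)
  | 2, 1 => - 2^-1 * (c o9_0 + c o9_1 * w + c o9_2 * w ^+ 2)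
  | 2, 0 => - 2^-1 * (c o9_3 + c o9_4 * w ^+ 2 + c o9_5 * w)
  | 0, 2 => - 2^-1 * (c o9_3 + c o9_4 * w + c o9_5 * w ^+ 2)
  | 0, 1 => - 2^-1 * (c o9_6 + c o9_7 * w ^+ 2 + c o9_8 * w)
  | 1, 0 => - 2^-1 * (c o9_6 + c o9_7 * w + c o9_8 * w ^+ 2)
  | _, _ => 0
  end.

Definition frameM (c : 'I_9 -> C) : 'M[C]_3 := \matrix_(a, b) frame_entry c a b.

Lemma frame_explicit c : frame c = frameM c.
Proof.
apply/matrixP => a b; rewrite /frame summxE.
under eq_bigr do rewrite mxE Pi_entry.
rewrite sum_ord9 mxE /sic_coord.
case: a => [[|[|[|a]]] Ha] //; case: b => [[|[|[|b]]] Hb] //=; rewrite !mxE /=;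
  move: (omega C) (omega_sq C) (conj_omega C) => u hu hcu;
  rewrite !rmorphM /= !rmorphN /= !rmorphXn /= ?rmorph1 ?rmorph0 hcu;
  by field: hu.
Qed.

End SicFrame.

Section FrameInvariants.
Variable C : numClosedFieldType.

Lemma frameM_adj (c : 'I_9 -> C) : (forall i, c i \is Num.real) ->
  adj (frameM c) = frameM c.
Proof.
move=> hc; have hcc i : (c i)^* = c i by apply/CrealP.
have h2 : (2^-1 : C)^* = 2^-1 by rewrite fmorphV /= conjC_nat.
apply/matrixP => a b; rewrite /adj !mxE.
case: a => [[|[|[|a]]] Ha] //; case: b => [[|[|[|b]]] Hb] //=;
  move: (omega C) (omega_sq C) (conj_omega C) => u hu hcu;
  rewrite ?(rmorphM, rmorphN, rmorphD, rmorphXn) /= h2 ?hcu !hcc;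
  by field: hu.
Qed.

(* Each projector has trace 1. *)
Lemma frameM_tr (c : 'I_9 -> C) : \tr (frameM c) = \sum_i c i.
Proof. by rewrite /mxtrace big_ord3 /= !mxE sum_ord9 /=; field. Qed.

(* The purity of a frame operator; equivalently tr (Pi_i Pi_j) = 1/4 for
   i != j, the defining overlap of a SIC in dimension 3. *)
Lemma frameM_tr2 (c : 'I_9 -> C) :
  \tr (frameM c *m frameM c) = 4^-1 * (\sum_i c i) ^+ 2 + 3 / 4 * \sum_i c i ^+ 2.
Proof.
rewrite /mxtrace big_ord3 /= !mxE !big_ord3 /= !mxE /= !sum_ord9.
by move: (omega C) (omega_sq C) => u hu; field: hu.
Qed.

End FrameInvariants.

Section Rho.
Context {C : numClosedFieldType}.
Implicit Types (r : C) (n v : 'I_9 -> C).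

Definition line_products v : C :=
  v o9_0 * v o9_1 * v o9_2 + v o9_3 * v o9_4 * v o9_5 + v o9_6 * v o9_7 * v o9_8
  + v o9_0 * v o9_3 * v o9_6 + v o9_1 * v o9_4 * v o9_7 + v o9_2 * v o9_5 * v o9_8
  + v o9_0 * v o9_4 * v o9_8 + v o9_1 * v o9_5 * v o9_6 + v o9_2 * v o9_3 * v o9_7
  + v o9_0 * v o9_5 * v o9_7 + v o9_1 * v o9_3 * v o9_8 + v o9_2 * v o9_4 * v o9_6.

(* Each line contributes its 3! orderings to Q, so F = sum v^3 - 3 (line products). *)
Lemma Fcub_lines v : Fcub v = \sum_i v i ^+ 3 - 3 * line_products v.
Proof. by rewrite /Fcub /line_products !sum_ord9 /inQ /=; field. Qed.

Lemma last_coord {n : 'I_9 -> C} : \sum_i n i = 0 ->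
  n o9_8 = - (n o9_0 + n o9_1 + n o9_2 + n o9_3 + n o9_4 + n o9_5 + n o9_6 + n o9_7).
Proof. by rewrite sum_ord9 => hs; apply/eqP; rewrite -subr_eq0 opprK addrC hs. Qed.

Lemma rho_frame r n : rho r n = frameM (fun i => 9^-1 + 4 * r * n i).
Proof.
rewrite -frame_explicit; apply: eq_bigr => i _.
by congr (_ *: _); rewrite /prob; field.
Qed.

Lemma rho_hermitian {r n} : r \is Num.real -> (forall i, n i \is Num.real) ->
  adj (rho r n) = rho r n.
Proof.
move=> hr hn; rewrite rho_frame frameM_adj // => i.
by rewrite ?(realD, realM, realV, hn, realn, hr).
Qed.

Lemma rho_trace {r n} : \sum_i n i = 0 -> \tr (rho r n) = 1.
Proof.
move=> hs; rewrite rho_frame frameM_tr sum_ord9 (last_coord hs).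
by field.
Qed.

Lemma rho_trace_sq r n : \sum_i n i = 0 ->
  \tr (rho r n *m rho r n) = 3^-1 + 12 * r ^+ 2 * \sum_i n i ^+ 2.
Proof.
move=> hs; rewrite rho_frame frameM_tr2 !sum_ord9 (last_coord hs).
by field.
Qed.

Lemma rho_det r n : \sum_i n i = 0 ->
  \det (rho r n) = 8 * r ^+ 3 * Fcub n - 2 * r ^+ 2 * \sum_i n i ^+ 2 + 27^-1.
Proof.
move=> hs; rewrite rho_frame det_mx3 !mxE /= Fcub_lines /line_products.
rewrite !sum_ord9 (last_coord hs).
by move: (omega C) (omega_sq C) => u hu; field: hu.
Qed.

End Rho.

Section Spectral.
Variable C : numClosedFieldType.

Lemma adjM m k p (X : 'M[C]_(m, k)) (Y : 'M[C]_(k, p)) : adj (X *m Y) = adj Y *m adj X.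
Proof. by rewrite /adj trmx_mul map_mxM. Qed.

Lemma hermitian_spectral n (A : 'M[C]_n) : adj A = A ->
  exists (P : 'M[C]_n) (d : 'rV[C]_n),
    [/\ P *m adj P = 1%:M, A = adj P *m diag_mx d *m P & forall k, d 0 k \is Num.real].
Proof.
move=> hA.
have hH : A \is hermsymmx by apply/is_hermitianmxP; rewrite expr0 scale1r -[LHS]hA.
have hU := spectral_unitarymx A.
exists (spectralmx A), (spectral_diag A); split.
- exact/unitarymxP.
- by rewrite {1}(orthomx_spectralP (hermitian_normalmx hH)) (invmx_unitary hU).
- by move=> k; apply: (mxOverP (hermitian_spectral_diag_real hH)).
Qed.

Section Diagonalised.
Variables (n : nat) (P : 'M[C]_n) (d : 'rV[C]_n).
Hypothesis unitaryP : P *m adj P = 1%:M.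
Let A := adj P *m diag_mx d *m P.

Lemma diag_trace : \tr A = \sum_k d 0 k.
Proof. by rewrite /A mxtrace_mulC mulmxA unitaryP mul1mx mxtrace_diag. Qed.

Lemma diag_sq : A *m A = adj P *m diag_mx (\row_k (d 0 k * d 0 k)) *m P.
Proof.
rewrite /A -!mulmxA; congr (_ *m _).
by rewrite !mulmxA -(mulmxA _ P) unitaryP mulmx1 mulmx_diag.
Qed.

Lemma diag_trace_sq : \tr (A *m A) = \sum_k d 0 k ^+ 2.
Proof.
rewrite diag_sq mxtrace_mulC mulmxA unitaryP mul1mx mxtrace_diag.
by apply: eq_bigr => k _; rewrite mxE expr2.
Qed.

Lemma diag_det : \det A = \prod_k d 0 k.
Proof. by rewrite /A !det_mulmx mulrC mulrA -det_mulmx unitaryP det1 mul1r det_diag. Qed.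

Lemma diag_quad (v : 'cV[C]_n) :
  (adj v *m A *m v) 0 0 = \sum_k d 0 k * `|(P *m v) k 0| ^+ 2.
Proof.
rewrite /A -!mulmxA !mulmxA -adjM -mulmxA mxE; apply: eq_bigr => k _.
by rewrite mul_mx_diag !mxE normCK; ring.
Qed.

End Diagonalised.

Lemma diag_psd (P : 'M[C]_3) (d : 'rV[C]_3) : P *m adj P = 1%:M ->
  psd (adj P *m diag_mx d *m P) <-> forall k, 0 <= d 0 k.
Proof.
move=> hP; split => [h k | h v].
- have := h (adj P *m \col_j (j == k)%:R).
  rewrite diag_quad // mulmxA hP mul1mx (bigD1 k) //= big1 => [|j hj].
    by rewrite !mxE eqxx normr1 expr1n mulr1 addr0.
  by rewrite !mxE (negbTE hj) normr0 expr0n mulr0.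
- by rewrite diag_quad //; apply: sumr_ge0 => k _; rewrite mulr_ge0 ?exprn_ge0.
Qed.

End Spectral.
Arguments hermitian_spectral {C n A}.

Section RealTriples.
Variable R : numDomainType.
Implicit Types a b c : R.

(* If a < 0 while a + b + c >= 0 and abc >= 0, then b + c > 0 and bc <= 0,
   so ab + bc + ca = a (b + c) + bc < 0. *)
Lemma real3_ge0 {a b c : R} :
  a \is Num.real -> b \is Num.real -> c \is Num.real -> 0 <= a + b + c ->
  0 <= a * b + b * c + c * a -> 0 <= a * b * c -> 0 <= a.
Proof.
move=> ra rb rc hs he hp; rewrite real_leNgt ?real0 //; apply/negP => ha.
have hbc : b * c <= 0 by rewrite -(nmulr_rge0 _ ha) mulrA.
have hbc' : 0 < b + c.
  by rewrite (_ : b + c = a + b + c - a) ?subr_gt0 ?(lt_le_trans ha hs) //; ring.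
have : a * (b + c) + b * c < 0 by rewrite -[0]addr0 ltr_leD // nmulr_rlt0.
rewrite (_ : a * (b + c) + b * c = a * b + b * c + c * a); last by ring.
by move/lt_geF; rewrite he.
Qed.

Lemma real3_nonneg a b c :
  a \is Num.real -> b \is Num.real -> c \is Num.real -> 0 <= a + b + c ->
  (0 <= a /\ 0 <= b /\ 0 <= c) <-> (0 <= a * b + b * c + c * a /\ 0 <= a * b * c).
Proof.
move=> ra rb rc hs; split => [[ha [hb hc]] | [he hp]].
  by split; rewrite ?addr_ge0 ?mulr_ge0.
have s1 : 0 <= b + c + a by rewrite (_ : b + c + a = a + b + c) //; ring.
have s2 : 0 <= b * c + c * a + a * b.
  by rewrite (_ : b * c + c * a + a * b = a * b + b * c + c * a) //; ring.
have s3 : 0 <= b * c * a by rewrite (_ : b * c * a = a * b * c) //; ring.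
split; first exact: (real3_ge0 ra rb rc hs he hp).
split; first exact: (real3_ge0 rb rc ra s1 s2 s3).
apply: (real3_ge0 rc ra rb).
- by rewrite (_ : c + a + b = a + b + c) //; ring.
- by rewrite (_ : c * a + a * b + b * c = a * b + b * c + c * a) //; ring.
- by rewrite (_ : c * a * b = a * b * c) //; ring.
Qed.
End RealTriples.

(* Nonnegative numbers summing to 1 whose squares also sum to 1 are each 0 or 1:
   d (1 - d) >= 0 termwise and these terms sum to 1 - 1 = 0. *)
Lemma nonneg_sum_sq_idem {R : numDomainType} {n} {d : 'I_n -> R} :
  (forall k, 0 <= d k) -> \sum_k d k = 1 -> \sum_k d k ^+ 2 = 1 ->
  forall k, d k * d k = d k.
Proof.
move=> h0 h1 h2 k.
have ge0 j : 0 <= d j * (1 - d j).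
  by rewrite mulr_ge0 // subr_ge0 -h1 (bigD1 j) //= lerDl sumr_ge0.
have hz : \sum_j d j * (1 - d j) = 0.
  rewrite (eq_bigr (fun j => d j - d j ^+ 2)) => [|j _]; last by ring.
  by rewrite sumrB h1 h2 subrr.
have /(_ k isT)/eqP := psumr_eq0P (fun j _ => ge0 j) hz.
by rewrite mulrBr mulr1 subr_eq0 eq_sym => /eqP.
Qed.

(* An idempotent matrix whose trace differs from its size is singular: the only
   invertible idempotent is the identity. *)
Lemma idempotent_det0 (F : fieldType) n (A : 'M[F]_n) :
  A *m A = A -> \tr A != n%:R -> \det A = 0.
Proof.
move=> hAA htr; apply/eqP; apply: contraNT htr => hdet.
have hU : A \in unitmx by rewrite unitmxE unitfE.
suff -> : A = 1%:M by rewrite mxtrace1.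
by rewrite -[A](mulmxK hU) hAA mulmxV.
Qed.

Lemma eigenvalue0_det (F : fieldType) n (A : 'M[F]_n) : eigenvalue A 0 <-> \det A = 0.
Proof.
split => [/eigenvalueP [v hv hv0] | /eqP /det0P [v hv0 hv]].
- by apply/eqP/det0P; exists v => //; rewrite hv scale0r.
- by apply/eigenvalueP; exists v => //; rewrite hv scale0r.
Qed.

Section DensityCriteria.
Context {C : numClosedFieldType} {A : 'M[C]_3}.
Hypotheses (hermA : adj A = A) (trA : \tr A = 1).

Lemma density_iff_invariants :
  density A <-> 0 <= 1 - \tr (A *m A) /\ 0 <= \det A.
Proof.
have [P [d [hP hAd hd]]] := hermitian_spectral hermA.
have h1 : d 0 o3_0 + d 0 o3_1 + d 0 o3_2 = 1 by rewrite -trA hAd diag_trace // big_ord3.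
have e2 : 1 - (d 0 o3_0 ^+ 2 + d 0 o3_1 ^+ 2 + d 0 o3_2 ^+ 2) =
    2 * (d 0 o3_0 * d 0 o3_1 + d 0 o3_1 * d 0 o3_2 + d 0 o3_2 * d 0 o3_0).
  by rewrite -[X in X - _](expr1n _ 2) -{1}h1; ring.
rewrite /density hermA trA hAd diag_trace_sq // diag_det // diag_psd // !big_ord3 /=.
rewrite e2 pmulr_rge0 ?ltr0n // -real3_nonneg ?h1 ?ler01 //.
split => [[_ [h _]] | [h0 [h1' h2]]]; first by split; [|split]; apply: h.
do 2 split => //; case=> [[|[|[|k]]] Hk] //; [move: h0 | move: h1' | move: h2];
  by congr (0 <= d 0 _); apply: val_inj.
Qed.

Lemma density_pure_iff : density A -> (A *m A = A <-> \tr (A *m A) = 1).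
Proof.
move=> [_ [hpsd _]]; split => [-> // | htr2].
have [P [d [hP hAd _]]] := hermitian_spectral hermA.
have h0 : forall k, 0 <= d 0 k by move: hpsd; rewrite hAd diag_psd.
have h1 : \sum_k d 0 k = 1 by rewrite -trA hAd diag_trace.
have h2 : \sum_k d 0 k ^+ 2 = 1 by rewrite -htr2 hAd diag_trace_sq.
rewrite hAd diag_sq //; congr (_ *m diag_mx _ *m _); apply/rowP => k.
by rewrite mxE (nonneg_sum_sq_idem h0 h1 h2).
Qed.

End DensityCriteria.

(* On the sphere r^2 = 1/18 the singularity condition 4 r^3 F - r^2 + 1/54 = 0
   reads (sqrt 2 F - 1) / 27 = 0, i.e. F = 1/sqrt 2. *)
Lemma singular_on_pure_sphere {C : numClosedFieldType} {r : C} (F : C) :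
  0 <= r -> r ^+ 2 = 18^-1 ->
  (4 * r ^+ 3 * F - r ^+ 2 + 54^-1 = 0 <-> F = (sqrtC 2)^-1).
Proof.
move=> hr hr2.
have hs : sqrtC 2 = 6 * r.
  by rewrite -(sqrCK (mulr_ge0 (ler0n _ 6) hr)) exprMn hr2; congr sqrtC; field.
have hs0 : sqrtC (2 : C) != 0 by rewrite sqrtC_eq0 pnatr_eq0.
have -> : 4 * r ^+ 3 * F - r ^+ 2 + 54^-1 = (sqrtC 2 * F - 1) / 27.
  by rewrite hs exprS hr2; field.
split => [/eqP | ->]; last by rewrite divff // subrr mul0r.
rewrite mulf_eq0 invr_eq0 pnatr_eq0 orbF subr_eq0 => /eqP h.
by apply: (mulfI hs0); rewrite h divff.
Qed.

Theorem mainTheorem7 (C : numClosedFieldType) (n : 'I_9 -> C) (r : C)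
  (hreal : forall i, n i \is Num.real)
  (hsum : \sum_i n i = 0) (hsq : \sum_i n i ^+ 2 = 1) (hr : 0 <= r) :
  (density (rho r n) <->
     r ^+ 2 <= 18^-1 /\ 0 <= 4 * r ^+ 3 * Fcub n - r ^+ 2 + 54^-1) /\
  ((density (rho r n) /\ eigenvalue (rho r n) 0) <->
     r ^+ 2 <= 18^-1 /\ 4 * r ^+ 3 * Fcub n - r ^+ 2 + 54^-1 = 0) /\
  (pure (rho r n) <-> r ^+ 2 = 18^-1 /\ Fcub n = (sqrtC 2)^-1).
Proof.
set A := rho r n; set G := 4 * r ^+ 3 * Fcub n - r ^+ 2 + 54^-1.
have hermA : adj A = A := rho_hermitian (ger0_real hr) hreal.
have trA : \tr A = 1 := rho_trace hsum.
have tr2A : \tr (A *m A) = 3^-1 + 12 * r ^+ 2 by rewrite rho_trace_sq // hsq mulr1.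
have detA : \det A = 2 * G by rewrite rho_det // hsq /G; field.
have hdens : density A <-> r ^+ 2 <= 18^-1 /\ 0 <= G.
  rewrite density_iff_invariants // tr2A detA pmulr_rge0 ?ltr0n //.
  by rewrite (_ : 1 - _ = 12 * (18^-1 - r ^+ 2)) ?pmulr_rge0 ?ltr0n ?subr_ge0 //; field.
have hsing : \det A = 0 <-> G = 0.
  by rewrite detA; split => [/eqP | ->]; [rewrite mulf_eq0 pnatr_eq0 => /eqP | rewrite mulr0].
have hpur : \tr (A *m A) = 1 <-> r ^+ 2 = 18^-1.
  rewrite tr2A; split => [h | ->]; last by field.
  have -> : r ^+ 2 = (3^-1 + 12 * r ^+ 2 - 3^-1) / 12 by field.
  by rewrite h; field.
split; first exact: hdens.
split.
  rewrite eigenvalue0_det hsing hdens.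
  by split => [[[? _] ->] | [? ->]]; do ?split.
(* (iii): purity fixes r, and a pure state is singular, which fixes F. *)
rewrite /pure; split => [[hD hAA] | [hr2 hF]].
- have hr2 : r ^+ 2 = 18^-1 by apply/hpur/(density_pure_iff hermA trA hD).
  split => //; apply/(singular_on_pure_sphere (Fcub n) hr hr2)/hsing.
  by apply: idempotent_det0 => //; rewrite trA eq_sym pnatr_eq1.
- have hG : G = 0 by apply/(singular_on_pure_sphere (Fcub n) hr hr2).
  have hD : density A by apply/hdens; rewrite hr2 hG.
  by split => //; apply/(density_pure_iff hermA trA hD)/hpur.
Qed.
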